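(* Fix $\lambda\in[0,1)$ and $p\in[0,1]$, and denote by $\mathbf{v}(\mathbf{v}^0,\cdot)$ the unique solution to the fluid model with initial condition $\mathbf{v}^0\in\overline{\mathcal{V}}^\infty$. If $\mathbf{w}^n\in\overline{\mathcal{V}}^\infty$ for all $n$ and $\|\mathbf{w}^n-\mathbf{v}^0\|_w\to0$ as $n\to\infty$, then for all $t\ge0$, $\lim_{n\to\infty}\|\mathbf{v}(\mathbf{w}^n,t)-\mathbf{v}(\mathbf{v}^0,t)\|_w=0$.
   Context: $\mathcal{S}=\{\mathbf{s}\in[0,1]^{\mathbb{Z}_+}:1=\mathbf{s}_0\ge\mathbf{s}_1\ge\cdots\ge0\}$, $\overline{\mathcal{S}}^\infty=\{\mathbf{s}\in\mathcal{S}:\sum_{i\ge1}\mathbf{s}_i<\infty\}$, $\overline{\mathcal{V}}^\infty=\{\mathbf{v}:\mathbf{v}_i=\sum_{j\ge i}\mathbf{s}_j\ \forall i,\text{ for some }\mathbf{s}\in\overline{\mathcal{S}}^\infty\}$; $\|\mathbf{x}\|_w^2=\sum_{i\ge0}2^{-i}\mathbf{x}_i^2$. $g_i(\mathbf{v})=p$ if $\mathbf{v}_i>0$, $=\min\{\lambda\mathbf{v}_{i-1},p\}$ if $\mathbf{v}_i=0<\mathbf{v}_{i-1}$, $=0$ if $\mathbf{v}_i=\mathbf{v}_{i-1}=0$. A solution to the fluid model with initial condition $\mathbf{v}^0$ is $\mathbf{v}:[0,\infty)\to\overline{\mathcal{V}}^\infty$ with (0) all coordinates $L$-Lipschitz for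 a common $L$; (1) $\mathbf{v}(0)=\mathbf{v}^0$; (2) for all $t$, $\mathbf{v}_0-\mathbf{v}_1=1$ and $1\ge\mathbf{v}_i-\mathbf{v}_{i+1}\ge\mathbf{v}_{i+1}-\mathbf{v}_{i+2}\ge0$, $i\ge0$; (3) for a.e. $t$ and all $i\ge1$, $\dot{\mathbf{v}}_i=\lambda(\mathbf{v}_{i-1}-\mathbf{v}_i)-(1-p)(\mathbf{v}_i-\mathbf{v}_{i+1})-g_i(\mathbf{v})$. It exists and is unique. *)

From Stdlib Require Import Reals.
From Coquelicot Require Import Coquelicot.
Open Scope R_scope.

Definition in_S (s : nat -> R) : Prop :=
  s 0%nat = 1 /\ (forall i : nat, 0 <= s (S i) <= s i).

Definition in_Sbar (s : nat -> R) : Prop :=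
  in_S s /\ ex_series (fun i => s (S i)).

Definition in_Vbar (v : nat -> R) : Prop :=
  exists s : nat -> R, in_Sbar s /\
    forall i : nat, v i = Series (fun j => s (i + j)%nat).

Definition wnorm (x : nat -> R) : R :=
  sqrt (Series (fun i => (/ 2) ^ i * (x i) ^ 2)).

(* g_i(v) for i >= 1 *)
Definition g (lam p : R) (v : nat -> R) (i : nat) : R :=
  if Rlt_dec 0 (v i) then p
  else if Rlt_dec 0 (v (pred i)) then Rmin (lam * v (pred i)) p
  else 0.

Definition null_set (N : R -> Prop) : Prop :=
  forall eps : R, 0 < eps ->
    exists a b : nat -> R,
      (forall n, a n <= b n) /\
      (forall t, N t -> exists n, a n < t < b n) /\
      (forall m, sum_f_R0 (fun n => b n - a n) m <= eps).

(* A solution of the fluid model on [0, oo) with initial condition v0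
   (values of v at negative times are irrelevant). *)
Definition fluid_solution (lam p : R) (v0 : nat -> R) (v : R -> nat -> R) : Prop :=
  (forall t, 0 <= t -> in_Vbar (v t)) /\
  (exists L : R, forall (i : nat) (t1 t2 : R), 0 <= t1 -> 0 <= t2 ->
      Rabs (v t1 i - v t2 i) <= L * Rabs (t1 - t2)) /\
  (forall i, v 0 i = v0 i) /\
  (forall t, 0 <= t ->
      v t 0%nat - v t 1%nat = 1 /\
      forall i : nat,
        1 >= v t i - v t (S i) /\
        v t i - v t (S i) >= v t (S i) - v t (S (S i)) /\
        v t (S i) - v t (S (S i)) >= 0) /\
  (exists N : R -> Prop, null_set N /\
     forall t, 0 < t -> ~ N t ->
       forall i : nat, (1 <= i)%nat ->
         is_derive (fun s => v s i) t
           (lam * (v t (pred i) - v t i) - (1 - p) * (v t i - v t (S i))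
            - g lam p (v t) i)).

From Stdlib Require Import Reals Lra Lia Classical.
From Coquelicot Require Import Coquelicot.
Open Scope R_scope.

(* Let [x = u - v] be the difference of two fluid solutions. The drift is dissipative: pairing
   the drift difference at coordinate [i] with [2 x_i] and completing squares bounds it by
   [x_(i-1)^2 + x_(i+1)^2], because [g] is nondecreasing in its own coordinate. Hence the
   truncated energy [E_K = sum_(1 <= i <= K+1) 2^-i x_i^2] satisfies
   [E_K' <= 4 E_K + 2^-(K+1) B^2] almost everywhere, where [B] bounds [x] on [[0, t]].
   Gronwall's inequality, valid for Lipschitz functions differentiable off a null set, gives
   [E_K(t) <= e^(4t) (E_K(0) + 2^-(K+1) B^2 / 4)]; since [x_0 = x_1], letting [K] go to
   infinity yields [||x(t)||_w^2 <= 3 e^(4t) ||x(0)||_w^2]. *)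

Lemma Rle_of_le_plus_small (x y c d : R) :
  0 <= c -> 0 < d -> (forall e, 0 < e < d -> x <= y + c * e) -> x <= y.
Proof.
  intros hc hd H. apply Rle_plus_epsilon. intros eps heps.
  assert (hq : 0 < eps / (c + 1)) by (apply Rdiv_lt_0_compat; lra).
  pose proof (Rmin_l (d / 2) (eps / (c + 1))) as he1.
  pose proof (Rmin_r (d / 2) (eps / (c + 1))) as he2.
  set (e := Rmin (d / 2) (eps / (c + 1))) in *.
  assert (he : 0 < e) by (unfold e; apply Rmin_glb_lt; [apply Rdiv_lt_0_compat; lra | exact hq]).
  assert (hce : c * e <= eps).
  { replace eps with (c * (eps / (c + 1)) + eps / (c + 1)) by (field; lra).
    pose proof (Rmult_le_compat_l c _ _ hc he2). lra. }
  pose proof (H e ltac:(lra)). lra.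
Qed.

Lemma sum_f_R0_ge_term (z : nat -> R) (n m : nat) :
  (forall k, 0 <= z k) -> (n <= m)%nat -> z n <= sum_f_R0 z m.
Proof.
  intros Hz. induction 1 as [|m _ IH].
  - destruct n as [|n]; simpl; [lra|]. pose proof (cond_pos_sum z n Hz). lra.
  - rewrite tech5. pose proof (Hz (S m)). lra.
Qed.

Lemma sum_f_R0_le_mono (z : nat -> R) (m m' : nat) :
  (forall k, 0 <= z k) -> (m <= m')%nat -> sum_f_R0 z m <= sum_f_R0 z m'.
Proof.
  intros Hz. induction 1 as [|m' _ IH]; [lra|]. rewrite tech5. pose proof (Hz (S m')). lra.
Qed.

Lemma sum_f_R0_shift (z : nat -> R) (K : nat) :
  sum_f_R0 z (S K) = z O + sum_f_R0 (fun k => z (S k)) K.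
Proof. induction K as [|K IH]; simpl in *; lra. Qed.

Lemma Series_ge_0 (a : nat -> R) : (forall n, 0 <= a n) -> 0 <= Series a.
Proof.
  intros Ha. unfold Series.
  assert (H : Rbar_le (Lim_seq (fun _ => 0)) (Lim_seq (sum_n a))).
  { apply Lim_seq_le_loc. exists O. intros n _. rewrite sum_n_Reals. now apply cond_pos_sum. }
  rewrite Lim_seq_const in H. destruct (Lim_seq (sum_n a)); simpl in *; lra.
Qed.

Lemma sum_f_R0_le_Series (a : nat -> R) (K : nat) :
  (forall n, 0 <= a n) -> ex_series a -> sum_f_R0 a K <= Series a.
Proof.
  intros Ha He. apply sum_incr; [|exact Ha]. apply is_series_Reals, Series_correct, He.
Qed.

Lemma ex_series_half_pow_dominated (a : nat -> R) (c : R) :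
  (forall i, Rabs (a i) <= c * (/ 2) ^ i) -> ex_series a.
Proof.
  intros Ha. apply (@ex_series_le R_AbsRing R_CompleteNormedModule a (fun i => c * (/ 2) ^ i) Ha).
  apply (ex_series_scal_l c (fun i => (/ 2) ^ i)), ex_series_geom. rewrite Rabs_right; lra.
Qed.

Lemma Series_le_of_partial_sums (a r : nat -> R) (M : R) :
  ex_series a -> is_lim_seq r 0 -> (forall K, sum_f_R0 a K <= M + r K) -> Series a <= M.
Proof.
  intros Ha Hr H.
  assert (L1 : is_lim_seq (fun K => sum_f_R0 a K) (Series a)).
  { apply is_lim_seq_ext with (sum_n a); [intros; apply sum_n_Reals | apply Series_correct, Ha]. }
  assert (L2 : is_lim_seq (fun K => M + r K) (M + 0))
    by (apply is_lim_seq_plus'; [apply is_lim_seq_const | exact Hr]).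
  rewrite Rplus_0_r in L2. exact (is_lim_seq_le _ _ _ _ H L1 L2).
Qed.

Lemma is_derive_sum_f_R0 (F : nat -> R -> R) (dF : nat -> R) (K : nat) (t : R) :
  (forall k, (k <= K)%nat -> is_derive (F k) t (dF k)) ->
  is_derive (fun s => sum_f_R0 (fun k => F k s) K) t (sum_f_R0 dF K).
Proof.
  intros HF. rewrite <- sum_n_Reals.
  apply (is_derive_ext (fun s => sum_n (fun k => F k s) K)); [intros; apply sum_n_Reals|].
  now apply (is_derive_sum_n (V := R_NormedModule)).
Qed.

Lemma is_derive_right_upper_bound (f : R -> R) (c d eps : R) :
  is_derive f c d -> 0 < eps ->
  exists del, 0 < del /\ forall s, c <= s <= c + del -> f s - f c <= (d + eps) * (s - c).
Proof.
  intros Hd heps. apply is_derive_Reals in Hd. destruct (Hd eps heps) as [del Hdel].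
  exists (del / 2). split; [pose proof (cond_pos del); lra|].
  intros s hs. destruct (Req_dec s c) as [->|hsc]; [lra|].
  assert (hpos : 0 < s - c) by lra.
  assert (Hs := Hdel (s - c) ltac:(lra) ltac:(rewrite Rabs_right; pose proof (cond_pos del); lra)).
  replace (c + (s - c)) with s in Hs by ring.
  apply Rabs_def2 in Hs. destruct Hs as [Hs _].
  apply Rmult_le_reg_r with (/ (s - c)); [now apply Rinv_0_lt_compat|].
  rewrite Rmult_assoc, Rinv_r by lra. lra.
Qed.

(** * Lipschitz functions on an interval *)

Definition lipschitz_on (a b L : R) (f : R -> R) : Prop :=
  forall s t, a <= s <= b -> a <= t <= b -> Rabs (f s - f t) <= L * Rabs (s - t).

Lemma lipschitz_on_bound (a b L : R) (f : R -> R) (t : R) :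
  0 <= L -> lipschitz_on a b L f -> a <= t <= b -> Rabs (f t) <= Rabs (f a) + L * (b - a).
Proof.
  intros hL Hf ht. specialize (Hf t a ht ltac:(lra)).
  rewrite (Rabs_right (t - a)) in Hf by lra.
  pose proof (Rmult_le_compat_l L (t - a) (b - a) hL ltac:(lra)).
  pose proof (Rabs_triang_inv (f t) (f a)). lra.
Qed.

Lemma lipschitz_on_minus (a b Lu Lv : R) (u v : R -> R) :
  lipschitz_on a b Lu u -> lipschitz_on a b Lv v ->
  lipschitz_on a b (Lu + Lv) (fun t => u t - v t).
Proof.
  intros Hu Hv s t hs ht.
  replace (u s - v s - (u t - v t)) with ((u s - u t) - (v s - v t)) by ring.
  pose proof (Rabs_triang (u s - u t) (- (v s - v t))). rewrite Rabs_Ropp in H.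
  pose proof (Hu s t hs ht). pose proof (Hv s t hs ht). unfold Rminus at 1. lra.
Qed.

Lemma lipschitz_on_scal (a b L c : R) (f : R -> R) :
  lipschitz_on a b L f -> lipschitz_on a b (Rabs c * L) (fun t => c * f t).
Proof.
  intros Hf s t hs ht. rewrite <- Rmult_minus_distr_l, Rabs_mult, Rmult_assoc.
  apply Rmult_le_compat_l; [apply Rabs_pos | now apply Hf].
Qed.

Lemma lipschitz_on_mult (a b Lu Lv Bu Bv : R) (u v : R -> R) :
  0 <= Lu -> 0 <= Bv ->
  lipschitz_on a b Lu u -> lipschitz_on a b Lv v ->
  (forall t, a <= t <= b -> Rabs (u t) <= Bu) -> (forall t, a <= t <= b -> Rabs (v t) <= Bv) ->
  lipschitz_on a b (Lu * Bv + Bu * Lv) (fun t => u t * v t).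
Proof.
  intros hLu hBv Hu Hv HBu HBv s t hs ht.
  replace (u s * v s - u t * v t) with ((u s - u t) * v s + u t * (v s - v t)) by ring.
  eapply Rle_trans; [apply Rabs_triang|]. rewrite !Rabs_mult.
  pose proof (Rabs_pos (s - t)).
  assert (Rabs (u s - u t) * Rabs (v s) <= Lu * Rabs (s - t) * Bv)
    by (apply Rmult_le_compat; auto using Rabs_pos).
  assert (Rabs (u t) * Rabs (v s - v t) <= Bu * (Lv * Rabs (s - t)))
    by (apply Rmult_le_compat; auto using Rabs_pos).
  lra.
Qed.

Lemma lipschitz_on_sqr (a b L B : R) (u : R -> R) :
  0 <= L -> 0 <= B -> lipschitz_on a b L u -> (forall t, a <= t <= b -> Rabs (u t) <= B) ->
  lipschitz_on a b (2 * B * L) (fun t => u t ^ 2).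
Proof.
  intros hL hB Hu HB s t hs ht.
  pose proof (lipschitz_on_mult a b L L B B u u hL hB Hu Hu HB HB s t hs ht) as H.
  simpl. rewrite !Rmult_1_r. replace (2 * B * L) with (L * B + B * L) by ring. exact H.
Qed.

Lemma lipschitz_on_sum (a b : R) (L : nat -> R) (F : nat -> R -> R) (K : nat) :
  (forall k, (k <= K)%nat -> lipschitz_on a b (L k) (F k)) ->
  lipschitz_on a b (sum_f_R0 L K) (fun t => sum_f_R0 (fun k => F k t) K).
Proof.
  induction K as [|K IH]; intros HF s t hs ht; simpl sum_f_R0.
  - now apply HF.
  - replace (sum_f_R0 (fun k => F k s) K + F (S K) s - (sum_f_R0 (fun k => F k t) K + F (S K) t))
      with ((sum_f_R0 (fun k => F k s) K - sum_f_R0 (fun k => F k t) K) + (F (S K) s - F (S K) t))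
      by ring.
    eapply Rle_trans; [apply Rabs_triang|].
    pose proof (IH (fun k hk => HF k (le_S _ _ hk)) s t hs ht).
    pose proof (HF (S K) (le_n _) s t hs ht).
    lra.
Qed.

Lemma exp_neg_mult_le_1 (C t : R) : 0 <= C -> 0 <= t -> exp (- C * t) <= 1.
Proof.
  intros hC ht. rewrite <- exp_0.
  destruct (Req_dec (C * t) 0) as [e|e].
  - replace (- C * t) with 0 by lra. lra.
  - left. apply exp_increasing. nra.
Qed.

Lemma exp_neg_mult_lipschitz (C T : R) :
  0 <= C -> lipschitz_on 0 T C (fun t => exp (- C * t)).
Proof.
  intros hC.
  assert (K : forall s t, 0 <= t <= s ->
             0 <= exp (- C * t) - exp (- C * s) <= C * (s - t)).
  { intros s t hts. replace (- C * s) with (- C * t + - C * (s - t)) by ring.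
    rewrite exp_plus. pose proof (exp_ineq1_le (- C * (s - t))).
    pose proof (exp_neg_mult_le_1 C (s - t) hC ltac:(lra)).
    pose proof (exp_neg_mult_le_1 C t hC ltac:(lra)).
    pose proof (exp_pos (- C * t)). pose proof (exp_pos (- C * (s - t))). split; nra. }
  intros s t hs ht. destruct (Rle_dec t s).
  - destruct (K s t ltac:(lra)). rewrite Rabs_left1, Rabs_right by lra. lra.
  - destruct (K t s ltac:(lra)). rewrite Rabs_right, Rabs_left1 by lra. lra.
Qed.

(** * Null sets and Gronwall's inequality *)

Lemma null_set_singleton (a : R) : null_set (fun t => t = a).
Proof.
  intros eps heps.
  exists (fun n => match n with O => a - eps / 4 | S _ => 0 end),
         (fun n => match n with O => a + eps / 4 | S _ => 0 end).
  split; [|split].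
  - intros [|n]; lra.
  - intros t ->. exists O. lra.
  - induction m as [|m IH]; simpl in *; lra.
Qed.

Lemma null_set_union (N1 N2 : R -> Prop) :
  null_set N1 -> null_set N2 -> null_set (fun t => N1 t \/ N2 t).
Proof.
  intros H1 H2 eps heps.
  destruct (H1 (eps / 2) ltac:(lra)) as [a1 [b1 [h1 [c1 s1]]]].
  destruct (H2 (eps / 2) ltac:(lra)) as [a2 [b2 [h2 [c2 s2]]]].
  set (pick := fun (u v : nat -> R) n => if Nat.even n then u (Nat.div2 n) else v (Nat.div2 n)).
  assert (pick_even : forall u v k, pick u v (2 * k)%nat = u k).
  { intros. unfold pick. now rewrite Nat.even_mul, Nat.div2_double. }
  assert (pick_odd : forall u v k, pick u v (S (2 * k)) = v k).
  { intros. unfold pick. now rewrite Nat.even_succ, Nat.odd_mul, Nat.div2_succ_double. }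
  exists (pick a1 a2), (pick b1 b2). split; [|split].
  - intros n. unfold pick. destruct (Nat.even n); auto.
  - intros t [Ht|Ht].
    + destruct (c1 t Ht) as [n hn]. exists (2 * n)%nat. now rewrite !pick_even.
    + destruct (c2 t Ht) as [n hn]. exists (S (2 * n)). now rewrite !pick_odd.
  - set (z := fun n => pick b1 b2 n - pick a1 a2 n).
    assert (z_ge0 : forall n, 0 <= z n).
    { intros n. unfold z, pick.
      destruct (Nat.even n); [specialize (h1 (Nat.div2 n)) | specialize (h2 (Nat.div2 n))]; lra. }
    assert (Hk : forall k, sum_f_R0 z (S (2 * k)) =
                 sum_f_R0 (fun n => b1 n - a1 n) k + sum_f_R0 (fun n => b2 n - a2 n) k).
    { induction k as [|k IH].
      - simpl. unfold z. rewrite !(pick_even _ _ O), !(pick_odd _ _ O). ring.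
      - replace (S (2 * S k)) with (S (S (S (2 * k)))) by lia.
        rewrite (tech5 z (S (S (2 * k)))), (tech5 z (S (2 * k))), IH, !tech5. unfold z.
        replace (S (S (2 * k))) with (2 * S k)%nat by lia.
        rewrite !pick_even, !pick_odd. ring. }
    intros m.
    pose proof (sum_f_R0_le_mono z m (S (2 * m)) z_ge0 ltac:(lia)).
    rewrite Hk in H. specialize (s1 m). specialize (s2 m). change (sum_f_R0 z m <= eps). lra.
Qed.

(* [Phi t] is the total length of the covering intervals lying to the left of [t]. *)
Lemma cover_length_fun (a b : nat -> R) (eta : R) :
  (forall n, a n <= b n) -> (forall m, sum_f_R0 (fun n => b n - a n) m <= eta) ->
  exists Phi : R -> R, (forall t, 0 <= Phi t <= eta) /\
    (forall t s, t <= s -> Phi t <= Phi s) /\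
    (forall n t s, a n < t -> t <= s -> s <= b n -> s - t <= Phi s - Phi t).
Proof.
  intros Hab Hsum.
  set (len := fun n t => Rmax 0 (Rmin t (b n) - a n)).
  set (P := fun m t => sum_f_R0 (fun n => len n t) m).
  assert (len_ge0 : forall n t, 0 <= len n t) by (intros; apply Rmax_l).
  assert (len_le : forall n t, len n t <= b n - a n).
  { intros n t. apply Rmax_lub; [specialize (Hab n); lra|].
    pose proof (Rmin_r t (b n)); lra. }
  assert (len_mono : forall n t s, t <= s -> 0 <= len n s - len n t).
  { intros n t s hts. assert (len n t <= len n s); [|lra]. apply Rle_max_compat_l.
    unfold Rmin; destruct (Rle_dec t (b n)), (Rle_dec s (b n)); lra. }
  assert (len_lin : forall n t s, a n < t -> t <= s -> s <= b n -> len n s - len n t = s - t).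
  { intros n t s h1 h2 h3. unfold len. rewrite (Rmin_left t), (Rmin_left s) by lra.
    rewrite !Rmax_right by lra. lra. }
  assert (P_le : forall m t, P m t <= eta).
  { intros m t. apply Rle_trans with (2 := Hsum m). apply sum_Rle. intros; apply len_le. }
  assert (P_incr : forall m t s, t <= s -> 0 <= P m s - P m t).
  { intros m t s hts. unfold P. rewrite <- minus_sum. apply cond_pos_sum. intros; now apply len_mono. }
  assert (P_lin : forall m n t s, (n <= m)%nat -> a n < t -> t <= s -> s <= b n ->
             P m t + (s - t) <= P m s).
  { intros m n t s hnm h1 h2 h3.
    pose proof (sum_f_R0_ge_term (fun k => len k s - len k t) n m
                  (fun k => len_mono k t s h2) hnm) as Hn.
    rewrite minus_sum, len_lin in Hn by assumption. unfold P. lra. }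
  assert (Hsup : forall t, {m | is_lub (fun y => exists k, y = P k t) m}).
  { intros t. apply completeness.
    - exists eta. intros y [k ->]. apply P_le.
    - exists (P O t). eauto. }
  exists (fun t => proj1_sig (Hsup t)). split; [|split].
  - intros t. destruct (Hsup t) as [m [Hu Hl]]; simpl. split.
    + apply Rle_trans with (P O t); [apply len_ge0 | apply Hu; eauto].
    + apply Hl. intros y [k ->]. apply P_le.
  - intros t s hts. destruct (Hsup t) as [m [Hu Hl]], (Hsup s) as [m' [Hu' Hl']]; simpl.
    apply Hl. intros y [k ->]. pose proof (P_incr k t s hts).
    assert (P k s <= m') by (apply Hu'; eauto). lra.
  - intros n t s h1 h2 h3. destruct (Hsup t) as [m [Hu Hl]], (Hsup s) as [m' [Hu' Hl']]; simpl.
    assert (m <= m' - (s - t)); [|lra].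
    apply Hl. intros y [k ->].
    pose proof (sum_f_R0_le_mono (fun j => len j t) k (Nat.max k n)
                  (fun j => len_ge0 j t) (Nat.le_max_l k n)).
    pose proof (P_lin (Nat.max k n) n t s (Nat.le_max_r k n) h1 h2 h3).
    assert (P (Nat.max k n) s <= m') by (apply Hu'; eauto).
    unfold P in *. lra.
Qed.

(* Real induction on the supremum of the points up to which [h] stays below [h a]. *)
Lemma nonincreasing_of_right_local_max (h : R -> R) (a b L : R) :
  a <= b -> 0 <= L ->
  (forall t s, a <= t <= s -> s <= b -> h s <= h t + L * (s - t)) ->
  (forall c, a <= c < b -> exists d, 0 < d /\ forall s, c <= s <= c + d -> h s <= h c) ->
  h b <= h a.
Proof.
  intros hab hL Hup Hloc.
  set (A := fun t => a <= t <= b /\ forall s, a <= s <= t -> h s <= h a).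
  assert (Aa : A a) by (split; [lra | intros s hs; replace s with a by lra; lra]).
  destruct (completeness A) as [c [Hub Hlub]].
  { exists b. intros t [ht _]; lra. }
  { exists a; exact Aa. }
  assert (hac : a <= c) by (apply Hub; exact Aa).
  assert (hcb : c <= b) by (apply Hlub; intros t [ht _]; lra).
  assert (Hbelow : forall s, a <= s < c -> h s <= h a).
  { intros s hs. destruct (Rle_dec (h s) (h a)) as [ok|nok]; [exact ok|]. exfalso.
    assert (c <= s); [|lra]. apply Hlub. intros t [ht Ht].
    destruct (Rle_dec t s) as [|nt]; [assumption|]. exfalso. apply nok, Ht. lra. }
  assert (Hc : h c <= h a).
  { destruct (Req_dec c a) as [->|hca]; [lra|].
    apply (Rle_of_le_plus_small _ _ L (c - a)); [lra|lra|].
    intros e he. pose proof (Hbelow (c - e) ltac:(lra)).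
    pose proof (Hup (c - e) c ltac:(lra) hcb). lra. }
  destruct (Req_dec c b) as [<-|hcb']; [exact Hc|]. exfalso.
  destruct (Hloc c ltac:(lra)) as [d [hd Hd]].
  assert (hc' : c < Rmin b (c + d)) by (apply Rmin_glb_lt; lra).
  assert (A (Rmin b (c + d))) as HA.
  { split; [split; [lra | apply Rmin_l]|].
    intros s hs. destruct (Rlt_dec s c); [apply Hbelow; lra|].
    pose proof (Rmin_r b (c + d)). pose proof (Hd s ltac:(lra)). lra. }
  pose proof (Hub _ HA). lra.
Qed.

(* Real induction for [f t - eps t - L Phi t], with [Phi] built from a cover of length [eta]
   of [N] and of the point [a] (where no derivative is assumed): off the cover the derivative
   makes it locally nonincreasing, on the cover [L Phi] absorbs the Lipschitz growth of [f].
   Then let [eps] and [eta] tend to [0]. *)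
Lemma nonincreasing_of_derive_nonpos_ae (f : R -> R) (a b L : R) (N : R -> Prop) :
  a <= b -> 0 <= L -> lipschitz_on a b L f -> null_set N ->
  (forall t, a < t < b -> ~ N t -> exists d, is_derive f t d /\ d <= 0) ->
  f b <= f a.
Proof.
  intros hab hL Hlip HN Hder.
  assert (Hup : forall t s, a <= t <= s -> s <= b -> f s - f t <= L * (s - t)).
  { intros t s h1 h2. specialize (Hlip s t ltac:(lra) ltac:(lra)).
    rewrite (Rabs_right (s - t)) in Hlip by lra. pose proof (Rle_abs (f s - f t)). lra. }
  assert (Key : forall eps eta, 0 < eps -> 0 < eta -> f b <= f a + (b - a) * eps + L * eta).
  { intros eps eta heps heta.
    destruct (null_set_union N (fun t => t = a) HN (null_set_singleton a) eta heta)
      as [an [bn [Hab [Hcov Hsum]]]].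
    destruct (cover_length_fun an bn eta Hab Hsum) as [Phi [HPhi [Phi_mono Phi_cover]]].
    set (h := fun t => f t - eps * t - L * Phi t).
    assert (Hh : h b <= h a).
    { apply (nonincreasing_of_right_local_max h a b L hab hL).
      - intros t s h1 h2. pose proof (Hup t s h1 h2).
        pose proof (Rmult_le_compat_l L _ _ hL (Phi_mono t s ltac:(lra))).
        unfold h. nra.
      - intros c hc. destruct (classic (N c \/ c = a)) as [Nc|Nc].
        + destruct (Hcov c Nc) as [n [h1 h2]].
          exists (Rmin (bn n - c) (b - c)). split; [apply Rmin_glb_lt; lra|].
          intros s hs. pose proof (Rmin_l (bn n - c) (b - c)). pose proof (Rmin_r (bn n - c) (b - c)).
          pose proof (Rmult_le_compat_l L _ _ hL (Phi_cover n c s h1 ltac:(lra) ltac:(lra))).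
          pose proof (Hup c s ltac:(lra) ltac:(lra)). unfold h. nra.
        + destruct (Hder c ltac:(lra) ltac:(tauto)) as [d [Hd hd]].
          destruct (is_derive_right_upper_bound f c d eps Hd heps) as [del [hdel Hdel]].
          exists del. split; [exact hdel|]. intros s hs.
          pose proof (Hdel s hs).
          pose proof (Rmult_le_compat_l L _ _ hL (Phi_mono c s ltac:(lra))).
          unfold h. nra. }
    pose proof (HPhi a). pose proof (HPhi b).
    pose proof (Rmult_le_compat_l L _ _ hL (proj2 (HPhi b))).
    pose proof (Rmult_le_pos L _ hL (proj1 (HPhi a))).
    unfold h in Hh. lra. }
  apply (Rle_of_le_plus_small _ _ (b - a) 1); [lra|lra|]. intros eps heps.
  apply (Rle_of_le_plus_small _ _ L 1); [lra|lra|]. intros eta heta.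
  apply Key; lra.
Qed.

(* [exp (- C t) * (f t + c / C)] is Lipschitz with a.e. nonpositive derivative. *)
Lemma gronwall_ae (f : R -> R) (T Lf C c : R) (N : R -> Prop) :
  0 <= T -> 0 < C -> 0 <= Lf -> lipschitz_on 0 T Lf f -> null_set N ->
  (forall t, 0 < t < T -> ~ N t -> exists d, is_derive f t d /\ d <= C * f t + c) ->
  f T + c / C <= exp (C * T) * (f 0 + c / C).
Proof.
  intros hT hC hLf Hf HN Hd.
  set (k := c / C).
  set (B := Rabs (f 0) + Lf * T + Rabs k).
  assert (Hfk : lipschitz_on 0 T Lf (fun t => f t + k)).
  { intros s t hs ht. replace (f s + k - (f t + k)) with (f s - f t) by ring. now apply Hf. }
  assert (Hm : exp (- C * T) * (f T + k) <= exp (- C * 0) * (f 0 + k)).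
  { apply (nonincreasing_of_derive_nonpos_ae (fun t => exp (- C * t) * (f t + k)) 0 T
             (C * B + 1 * Lf) N hT).
    - pose proof (Rabs_pos (f 0)). pose proof (Rabs_pos k).
      assert (0 <= Lf * T) by (apply Rmult_le_pos; lra). unfold B. nra.
    - eapply (lipschitz_on_mult 0 T C Lf 1 B (fun t => exp (- C * t)) (fun t => f t + k));
        try lra.
      + pose proof (Rabs_pos (f 0)). pose proof (Rabs_pos k).
        assert (0 <= Lf * T) by (apply Rmult_le_pos; lra). unfold B. lra.
      + now apply exp_neg_mult_lipschitz; lra.
      + exact Hfk.
      + intros t ht. rewrite Rabs_right by (left; apply exp_pos).
        apply exp_neg_mult_le_1; lra.
      + intros t ht. pose proof (lipschitz_on_bound 0 T Lf f t hLf Hf ht).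
        pose proof (Rabs_triang (f t) k). unfold B. lra.
    - exact HN.
    - intros t ht hN. destruct (Hd t ht hN) as [d [Hd1 Hd2]].
      exists (- C * exp (- C * t) * (f t + k) + exp (- C * t) * d). split.
      + apply (is_derive_mult (fun t => exp (- C * t)) (fun t => f t + k));
          [| | intros; apply Rmult_comm].
        * apply (is_derive_comp exp (fun t => - C * t) t (exp (- C * t)) (- C)); [apply is_derive_exp|].
          pose proof (is_derive_scal (fun t => t) t (- C) 1 (is_derive_id t)) as H.
          rewrite Rmult_1_r in H. exact H.
        * pose proof (is_derive_plus f (fun _ => k) t d 0 Hd1 (is_derive_const k t)) as H.
          rewrite Rplus_0_r in H. exact H.
      + pose proof (exp_pos (- C * t)).
        replace (- C * exp (- C * t) * (f t + k) + exp (- C * t) * d)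
          with (exp (- C * t) * (d - C * f t - c)) by (unfold k; field; lra). nra. }
  rewrite Rmult_0_r, exp_0, Rmult_1_l in Hm.
  apply Rmult_le_compat_l with (r := exp (C * T)) in Hm; [|left; apply exp_pos].
  rewrite <- Rmult_assoc, <- exp_plus in Hm. replace (C * T + - C * T) with 0 in Hm by ring.
  rewrite exp_0, Rmult_1_l in Hm. exact Hm.
Qed.

(** * Continuous dependence of the fluid model on the initial condition *)

Lemma fluid_solution_bounds (lam p : R) (z0 : nat -> R) (Z : R -> nat -> R) :
  fluid_solution lam p z0 Z ->
  exists L, 0 <= L /\ (forall i T, lipschitz_on 0 T L (fun s => Z s i)) /\
    (forall s i, 0 <= s -> 0 <= Z s i <= Z 0 O + L * s).
Proof.
  intros [HV [[L HL] [_ [Hshape _]]]].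
  exists (Rabs L). split; [apply Rabs_pos|]. split.
  { intros i T s1 s2 h1 h2. eapply Rle_trans; [apply HL; lra|].
    apply Rmult_le_compat_r; [apply Rabs_pos | apply Rle_abs]. }
  intros s i hs. split.
  - destruct (HV s hs) as [sig [[[sig0 sig_mono] _] Hsig]]. rewrite Hsig.
    apply Series_ge_0. intros j. destruct (i + j)%nat; [lra | apply sig_mono].
  - assert (Hdecr : forall i, Z s i <= Z s O).
    { destruct (Hshape s hs) as [H01 Hi].
      intros k; induction k as [|[|k] IH]; [lra | lra |].
      destruct (Hi k) as [_ [_ H]]. lra. }
    specialize (HL O s 0 hs ltac:(lra)). rewrite Rminus_0_r, (Rabs_right s) in HL by lra.
    pose proof (Rmult_le_compat_r s L (Rabs L) hs (Rle_abs L)).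
    pose proof (Rle_abs (Z s O - Z 0 O)). pose proof (Hdecr i). lra.
Qed.

Definition drift (lam p : R) (v : nat -> R) (i : nat) : R :=
  lam * (v (pred i) - v i) - (1 - p) * (v i - v (S i)) - g lam p v i.

Section FluidStability.

Variables lam p : R.
Hypothesis hlam : 0 <= lam < 1.
Hypothesis hp : 0 <= p <= 1.

Lemma g_monotone (a b : nat -> R) (i : nat) :
  0 <= a i -> 0 <= b i -> 0 <= (a i - b i) * (g lam p a i - g lam p b i).
Proof.
  intros ha hb.
  assert (g_le_p : forall v, ~ 0 < v i -> 0 <= g lam p v i <= p).
  { intros v hv. unfold g. destruct (Rlt_dec 0 (v i)) as [|_]; [contradiction|].
    destruct (Rlt_dec 0 (v (pred i))); [|lra].
    split; [apply Rmin_glb; nra | apply Rmin_r]. }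
  assert (g_pos : forall v, 0 < v i -> g lam p v i = p).
  { intros v hv. unfold g. destruct (Rlt_dec 0 (v i)); [reflexivity | contradiction]. }
  destruct (Rlt_dec 0 (a i)) as [ha'|ha'], (Rlt_dec 0 (b i)) as [hb'|hb'].
  - rewrite !g_pos by assumption. lra.
  - rewrite (g_pos a ha'). pose proof (g_le_p b hb'). replace (b i) with 0 by lra. nra.
  - rewrite (g_pos b hb'). pose proof (g_le_p a ha'). replace (a i) with 0 by lra. nra.
  - replace (a i) with 0 by lra. replace (b i) with 0 by lra. lra.
Qed.

Lemma drift_pairing_le (a0 a1 a2 D : R) :
  0 <= a1 * D ->
  2 * a1 * (lam * (a0 - a1) - (1 - p) * (a1 - a2) - D) <= a0 ^ 2 + a2 ^ 2.
Proof.
  intros hD.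
  assert (0 <= lam * (a0 - a1) ^ 2) by (apply Rmult_le_pos; [lra | apply pow2_ge_0]).
  assert (0 <= (1 - p) * (a1 - a2) ^ 2) by (apply Rmult_le_pos; [lra | apply pow2_ge_0]).
  assert (0 <= (1 - lam) * a0 ^ 2) by (apply Rmult_le_pos; [lra | apply pow2_ge_0]).
  assert (0 <= p * a2 ^ 2) by (apply Rmult_le_pos; [lra | apply pow2_ge_0]).
  assert (0 <= (lam + (1 - p)) * a1 ^ 2) by (apply Rmult_le_pos; [lra | apply pow2_ge_0]).
  replace (2 * a1 * (lam * (a0 - a1) - (1 - p) * (a1 - a2) - D)) with
    (a0 ^ 2 + a2 ^ 2 - (lam * (a0 - a1) ^ 2 + (1 - p) * (a1 - a2) ^ 2 + (1 - lam) * a0 ^ 2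
      + p * a2 ^ 2 + (lam + (1 - p)) * a1 ^ 2) - 2 * (a1 * D)) by ring.
  lra.
Qed.

Variables (u0 v0 : nat -> R) (U V : R -> nat -> R).
Hypothesis HU : fluid_solution lam p u0 U.
Hypothesis HV : fluid_solution lam p v0 V.

Definition energy (K : nat) (s : R) : R :=
  sum_f_R0 (fun k => (/ 2) ^ S k * (U s (S k) - V s (S k)) ^ 2) K.

Lemma fluid_difference_head (s : R) : 0 <= s -> U s O - V s O = U s 1%nat - V s 1%nat.
Proof.
  intros hs. destruct HU as [_ [_ [_ [HU2 _]]]], HV as [_ [_ [_ [HV2 _]]]].
  destruct (HU2 s hs) as [e1 _], (HV2 s hs) as [e2 _]. lra.
Qed.

Lemma is_derive_energy (K : nat) (s : R) :
  (forall i, (1 <= i)%nat -> is_derive (fun r => U r i) s (drift lam p (U s) i)) ->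
  (forall i, (1 <= i)%nat -> is_derive (fun r => V r i) s (drift lam p (V s) i)) ->
  is_derive (energy K) s
    (sum_f_R0 (fun k => (/ 2) ^ S k * (2 * (U s (S k) - V s (S k))
                          * (drift lam p (U s) (S k) - drift lam p (V s) (S k)))) K).
Proof.
  intros HdU HdV. apply is_derive_sum_f_R0. intros k _.
  replace ((/ 2) ^ S k * (2 * (U s (S k) - V s (S k))
             * (drift lam p (U s) (S k) - drift lam p (V s) (S k))))
    with ((/ 2) ^ S k * (INR 2 * minus (drift lam p (U s) (S k)) (drift lam p (V s) (S k))
                          * (U s (S k) - V s (S k)) ^ pred 2))
    by (unfold minus, plus, opp; simpl; ring).
  apply is_derive_scal, (is_derive_pow (fun r => U r (S k) - V r (S k))),
        (is_derive_minus (fun r => U r (S k)) (fun r => V r (S k))); [apply HdU | apply HdV]; lia.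
Qed.

Lemma energy_derive_le (K : nat) (s : R) : 0 <= s ->
  (forall i, (1 <= i)%nat -> is_derive (fun r => U r i) s (drift lam p (U s) i)) ->
  (forall i, (1 <= i)%nat -> is_derive (fun r => V r i) s (drift lam p (V s) i)) ->
  exists d, is_derive (energy K) s d /\
    d <= 4 * energy K s + (/ 2) ^ S K * (U s (S (S K)) - V s (S (S K))) ^ 2.
Proof.
  intros hs HdU HdV.
  set (x := fun i => U s i - V s i).
  set (y := fun j => (/ 2) ^ j * x j ^ 2).
  set (dx := fun i => drift lam p (U s) i - drift lam p (V s) i).
  assert (y_ge0 : forall j, 0 <= y j).
  { intros j. apply Rmult_le_pos; [apply pow_le; lra | apply pow2_ge_0]. }
  exists (sum_f_R0 (fun k => (/ 2) ^ S k * (2 * x (S k) * dx (S k))) K). split.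
  - exact (is_derive_energy K s HdU HdV).
  - destruct (fluid_solution_bounds lam p u0 U HU) as [Lu [_ [_ HbU]]].
    destruct (fluid_solution_bounds lam p v0 V HV) as [Lv [_ [_ HbV]]].
    assert (Hterm : forall k, (/ 2) ^ S k * (2 * x (S k) * dx (S k)) <= y k * / 2 + y (S (S k)) * 2).
    { intros k.
      pose proof (g_monotone (U s) (V s) (S k) (proj1 (HbU s (S k) hs)) (proj1 (HbV s (S k) hs))) as Hg.
      pose proof (drift_pairing_le (x k) (x (S k)) (x (S (S k)))
                    (g lam p (U s) (S k) - g lam p (V s) (S k)) Hg) as Hp.
      replace (dx (S k)) with (lam * (x k - x (S k)) - (1 - p) * (x (S k) - x (S (S k)))
                               - (g lam p (U s) (S k) - g lam p (V s) (S k)))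
        by (unfold dx, drift, x; simpl pred; ring).
      apply Rmult_le_compat_l with (r := (/ 2) ^ S k) in Hp; [|apply pow_le; lra].
      unfold y. simpl pow. simpl pow in Hp. lra. }
    eapply Rle_trans; [apply sum_Rle; intros k _; apply Hterm|].
    rewrite plus_sum, <- !scal_sum.
    pose proof (sum_f_R0_shift y K) as S1. pose proof (sum_f_R0_shift (fun k => y (S k)) K) as S2.
    assert (HE : sum_f_R0 (fun k => y (S k)) K = energy K s) by reflexivity.
    rewrite tech5 in S1, S2. rewrite HE in S1, S2.
    assert (y0 : y O = 2 * y 1%nat).
    { unfold y, x. rewrite (fluid_difference_head s hs). simpl. field. }
    assert (y1 : y 1%nat <= energy K s)
      by (rewrite <- HE; apply (sum_f_R0_ge_term (fun k => y (S k)) 0 K); auto; lia).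
    pose proof (y_ge0 (S K)). pose proof (y_ge0 1%nat).
    assert (2 * y (S (S K)) = (/ 2) ^ S K * (U s (S (S K)) - V s (S (S K))) ^ 2)
      by (unfold y, x; simpl; field).
    lra.
Qed.

Lemma fluid_difference_lipschitz_bounded (t : R) : 0 <= t -> exists L B, 0 <= L /\ 0 <= B /\
  (forall i, lipschitz_on 0 t L (fun s => U s i - V s i)) /\
  (forall s i, 0 <= s <= t -> Rabs (U s i - V s i) <= B).
Proof.
  intros ht.
  destruct (fluid_solution_bounds lam p u0 U HU) as [Lu [hLu [HLu HbU]]].
  destruct (fluid_solution_bounds lam p v0 V HV) as [Lv [hLv [HLv HbV]]].
  exists (Lu + Lv), ((U 0 O + Lu * t) + (V 0 O + Lv * t)).
  assert (HB : forall s i, 0 <= s <= t ->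
             Rabs (U s i - V s i) <= (U 0 O + Lu * t) + (V 0 O + Lv * t)).
  { intros s i hs. destruct (HbU s i ltac:(lra)), (HbV s i ltac:(lra)).
    pose proof (Rmult_le_compat_l Lu s t hLu ltac:(lra)).
    pose proof (Rmult_le_compat_l Lv s t hLv ltac:(lra)).
    apply Rabs_le. lra. }
  split; [lra|]. split; [|split; [|exact HB]].
  - pose proof (HB 0 O ltac:(lra)). pose proof (Rabs_pos (U 0 O - V 0 O)). lra.
  - intros i. apply lipschitz_on_minus; [apply HLu | apply HLv].
Qed.

Lemma energy_lipschitz (t L B : R) (K : nat) : 0 <= L -> 0 <= B ->
  (forall i, lipschitz_on 0 t L (fun s => U s i - V s i)) ->
  (forall s i, 0 <= s <= t -> Rabs (U s i - V s i) <= B) ->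
  lipschitz_on 0 t (sum_f_R0 (fun k => Rabs ((/ 2) ^ S k) * (2 * B * L)) K) (energy K).
Proof.
  intros hL hB HL HB. unfold energy. apply lipschitz_on_sum. intros k _.
  apply lipschitz_on_scal, lipschitz_on_sqr; [exact hL | exact hB | apply HL |].
  intros s hs. now apply HB.
Qed.

Lemma energy_gronwall (t : R) : 0 <= t -> exists B, 0 <= B /\
  (forall s i, 0 <= s <= t -> Rabs (U s i - V s i) <= B) /\
  forall K, energy K t <= exp (4 * t) * (energy K 0 + (/ 2) ^ S K * B ^ 2 / 4).
Proof.
  intros ht.
  destruct (fluid_difference_lipschitz_bounded t ht) as [L [B [hL [hB [HL HB]]]]].
  pose proof HU as [_ [_ [_ [_ [NU [HNU HdU]]]]]].
  pose proof HV as [_ [_ [_ [_ [NV [HNV HdV]]]]]].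
  exists B. split; [exact hB|]. split; [exact HB|]. intros K.
  set (c := (/ 2) ^ S K * B ^ 2).
  assert (hc : 0 <= c) by (apply Rmult_le_pos; [apply pow_le | apply pow2_ge_0]; lra).
  assert (hLf : 0 <= sum_f_R0 (fun k => Rabs ((/ 2) ^ S k) * (2 * B * L)) K).
  { apply cond_pos_sum. intros k. apply Rmult_le_pos; [apply Rabs_pos | nra]. }
  assert (Hd : forall s, 0 < s < t -> ~ (NU s \/ NV s) ->
             exists d, is_derive (energy K) s d /\ d <= 4 * energy K s + c).
  { intros s hs hN.
    destruct (energy_derive_le K s ltac:(lra)) as [d [Hd Hdle]].
    { intros i hi. exact (HdU s ltac:(lra) ltac:(tauto) i hi). }
    { intros i hi. exact (HdV s ltac:(lra) ltac:(tauto) i hi). }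
    exists d. split; [exact Hd|].
    pose proof (HB s (S (S K)) ltac:(lra)) as Hx.
    pose proof (Rabs_pos (U s (S (S K)) - V s (S (S K)))).
    rewrite <- (pow2_abs (U s (S (S K)) - V s (S (S K)))) in Hdle.
    assert (Hsq : Rabs (U s (S (S K)) - V s (S (S K))) ^ 2 <= B ^ 2) by (simpl; nra).
    apply Rmult_le_compat_l with (r := (/ 2) ^ S K) in Hsq; [|apply pow_le; lra].
    unfold c. lra. }
  pose proof (gronwall_ae (energy K) t _ 4 c (fun s => NU s \/ NV s) ht ltac:(lra) hLf
                (energy_lipschitz t L B K hL hB HL HB) (null_set_union _ _ HNU HNV) Hd).
  assert (0 <= c / 4) by lra. lra.
Qed.

Lemma weighted_sq_series_le (t : R) : 0 <= t ->
  Series (fun i => (/ 2) ^ i * (U t i - V t i) ^ 2) <=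
  3 * exp (4 * t) * Series (fun i => (/ 2) ^ i * (U 0 i - V 0 i) ^ 2).
Proof.
  intros ht. destruct (energy_gronwall t ht) as [B [hB [HB HE]]].
  set (a := fun s i => (/ 2) ^ i * (U s i - V s i) ^ 2).
  change (Series (a t) <= 3 * exp (4 * t) * Series (a 0)).
  assert (a_ge0 : forall s i, 0 <= a s i).
  { intros s i. apply Rmult_le_pos; [apply pow_le; lra | apply pow2_ge_0]. }
  assert (Ea : forall s, 0 <= s <= t -> ex_series (a s)).
  { intros s hs. apply (ex_series_half_pow_dominated _ (B ^ 2)). intros i.
    rewrite Rabs_right by (apply Rle_ge, a_ge0). unfold a.
    pose proof (HB s i hs). pose proof (Rabs_pos (U s i - V s i)).
    rewrite <- (pow2_abs (U s i - V s i)), Rmult_comm.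
    apply Rmult_le_compat_r; [apply pow_le; lra | simpl; nra]. }
  assert (partial : forall s K, 0 <= s -> sum_f_R0 (a s) (S K) = 2 * a s 1%nat + energy K s).
  { intros s K hs. rewrite sum_f_R0_shift. unfold a at 1.
    rewrite (fluid_difference_head s hs).
    change (sum_f_R0 (fun k => a s (S k)) K) with (energy K s). unfold a. simpl. field. }
  assert (a1_le : forall s K, a s 1%nat <= energy K s).
  { intros s K. apply (sum_f_R0_ge_term (fun k => a s (S k)) 0 K); [intros; apply a_ge0 | lia]. }
  assert (He : 0 < exp (4 * t)) by apply exp_pos.
  apply (Series_le_of_partial_sums (a t) (fun K => 3 * exp (4 * t) * B ^ 2 / 4 * (/ 2) ^ S K)).
  - apply Ea; lra.
  - pose proof (is_lim_seq_scal_l _ (3 * exp (4 * t) * B ^ 2 / 4) _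
                  (proj1 (is_lim_seq_incr_1 _ _) (is_lim_seq_geom (/ 2) ltac:(rewrite Rabs_right; lra))))
      as H.
    simpl in H. rewrite Rmult_0_r in H. exact H.
  - intros K.
    pose proof (sum_f_R0_le_mono (a t) K (S K) (a_ge0 t) ltac:(lia)).
    pose proof (sum_f_R0_le_Series (a 0) (S K) (a_ge0 0) ltac:(apply Ea; lra)).
    rewrite (partial t K ht) in H. rewrite (partial 0 K ltac:(lra)) in H0.
    pose proof (a1_le t K). pose proof (a_ge0 0 1%nat). pose proof (HE K).
    assert (energy K 0 <= Series (a 0)) by lra.
    assert (exp (4 * t) * energy K 0 <= exp (4 * t) * Series (a 0)) by (apply Rmult_le_compat_l; lra).
    replace (3 * exp (4 * t) * B ^ 2 / 4 * (/ 2) ^ S K)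
      with (3 * (exp (4 * t) * ((/ 2) ^ S K * B ^ 2 / 4)))
      by field.
    lra.
Qed.

Lemma wnorm_difference_le (t : R) : 0 <= t ->
  wnorm (fun i => U t i - V t i) <= sqrt (3 * exp (4 * t)) * wnorm (fun i => u0 i - v0 i).
Proof.
  intros ht. unfold wnorm.
  rewrite <- sqrt_mult_alt by (pose proof (exp_pos (4 * t)); lra).
  apply sqrt_le_1_alt.
  pose proof HU as [_ [_ [HU0 _]]]. pose proof HV as [_ [_ [HV0 _]]].
  rewrite (Series_ext (fun i => (/ 2) ^ i * (u0 i - v0 i) ^ 2)
                      (fun i => (/ 2) ^ i * (U 0 i - V 0 i) ^ 2))
    by (intros i; now rewrite HU0, HV0).
  now apply weighted_sq_series_le.
Qed.

End FluidStability.

Theorem corollary2 :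
  forall (lam p : R), 0 <= lam < 1 -> 0 <= p <= 1 ->
  forall (v0 : nat -> R) (w : nat -> nat -> R)
         (V : R -> nat -> R) (W : nat -> R -> nat -> R),
    in_Vbar v0 ->
    (forall n, in_Vbar (w n)) ->
    fluid_solution lam p v0 V ->
    (forall n, fluid_solution lam p (w n) (W n)) ->
    is_lim_seq (fun n => wnorm (fun i => w n i - v0 i)) 0 ->
    forall t : R, 0 <= t ->
      is_lim_seq (fun n => wnorm (fun i => W n t i - V t i)) 0.
Proof.
  (* Membership in [Vbar] is already part of [fluid_solution]. *)
  intros lam p hlam hp v0 w V W _ _ HV HW Hlim t ht.
  set (c := sqrt (3 * exp (4 * t))).
  apply is_lim_seq_le_le with (u := fun _ => 0) (w := fun n => c * wnorm (fun i => w n i - v0 i)).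
  - intros n. split; [apply sqrt_pos|].
    exact (wnorm_difference_le lam p hlam hp (w n) v0 (W n) V (HW n) HV t ht).
  - apply is_lim_seq_const.
  - pose proof (is_lim_seq_scal_l _ c _ Hlim) as H. simpl in H. rewrite Rmult_0_r in H. exact H.
Qed.
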